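(* With $G,H,\Gamma,X,N$ as in the context, let $\mathcal C\subset G$ be a conjugacy class of elements of order two such that no $c\in\mathcal C$ is even and at least one $c\in\mathcal C$ satisfies $c\notin N$. Let $V'\subseteq\mathrm{Ind}_H^GX$ be an irreducible representation of $G$ and $c\in\mathcal C$. Then: (1) if $\Gamma\cong D_n$, $\dim V'^{c=1}=\dim V'^{c=-1}=\tfrac12\dim V'$; (2) if $\Gamma\in\{A_4,S_4,A_5\}$, $\dim V'^{c=-1}<\tfrac23\dim V'$.
   Context: All representations are over an algebraically closed field $E$ of characteristic zero. $G$ is a finite group, $H\trianglelefteq G$ a normal subgroup with a surjection $H\to\Gamma$, where $\Gamma\subset\mathrm{PGL}(V)$ ($\dim V=2$) is a finite subgroup acting irreducibly on $\mathbf P(V)$, so $\Gamma\cong A_4,S_4,A_5$ or $D_n$ (order $2n$, $n\ge3$ odd). $W$ is the trace-zero endomorphisms of $V$ with $\Gamma$ acting by conjugation; $X\subseteq W$ is the unique $\Gamma$-stable subspace on which $\Gamma$ acts irreducibly and faithfully ($X=W$ unless $\Gamma\cong D_n$, when $W=X\oplus\epsilon$ with $\epsilon$ the quadratic character and $\dim X=2$), viewed as an $H$-representation $\Psi'$. Let $\mathrm{Ker}=\ker(H\to\Gamma)$, $N(\mathrm{Ker})$ its normalizer in $G$, and $N$ the preimage in $N(\mathrm{Ker})$ of $\{\alpha\in\mathrm{Aut}(\Gamma):\Psi\circ\alpha\cong\Psi\}$ under the conjugation map $N(\mathrm{Ker})\to\mathrm{Aut}(\Gamma)$, $\Psi$ being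 the representation of $\Gamma$ on $X$. An element $c\in N$ of order two is called even if it maps to the identity in $\mathrm{Aut}(\Gamma)$; elements not in $N$ are not even. *)

From HB Require Import structures.
From mathcomp Require Import all_boot all_order all_algebra all_fingroup all_solvable all_field all_character.
Set Implicit Arguments. Unset Strict Implicit. Unset Printing Implicit Defensive.
Import GRing.Theory.
Local Open Scope ring_scope.

(* [sigma] realises [Gam] as a finite subgroup of PGL(V), dim V = 2:
   sigma x is a lift in GL_2(E) of the image of x, sigma is multiplicative
   up to scalars, and only the identity maps to a scalar matrix. *)
Definition proj_embedding (E : fieldType) (rT : finGroupType) (Gam : {set rT})
    (sigma : rT -> 'M[E]_2) : Prop :=
  [/\ forall x, x \in Gam -> sigma x \in unitmx,
      forall x y, x \in Gam -> y \in Gam ->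
        exists a : E, sigma (x * y)%g = a *: (sigma x *m sigma y)
    & forall x, x \in Gam -> is_scalar_mx (sigma x) -> x = 1%g].

(* Gam acts irreducibly on P(V): no line of V (row vectors) is fixed by all of Gam. *)
Definition irreducible_on_PV (E : fieldType) (rT : finGroupType) (Gam : {set rT})
    (sigma : rT -> 'M[E]_2) : Prop :=
  forall v : 'rV[E]_2, v != 0 ->
    exists2 x, x \in Gam & ~~ (v *m sigma x <= v)%MS.

(* Matrix (on mxvec-coordinates of 'M_2) of the conjugation action
   M |-> sigma(x)^-1 M sigma(x) (a right action, matching row-vector reps). *)
Definition conj_mx (E : fieldType) (rT : finGroupType) (sigma : rT -> 'M[E]_2)
    (x : rT) : 'M[E]_(2 * 2) :=
  lin_mx (fun M : 'M[E]_2 => invmx (sigma x) *m M *m sigma x).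

(* The rows of P span a subspace of W = trace-zero endomorphisms of V. *)
Definition in_trace_zero (E : fieldType) d (P : 'M[E]_(d, 2 * 2)) : Prop :=
  forall i : 'I_d, \tr (vec_mx (row i P)) = 0.

(* rX is (isomorphic to) the representation Psi of Gam on X: X is the
   Gam-stable subspace of W spanned by the rows of P, Gam acts on it
   irreducibly and faithfully. *)
Definition is_Psi (E : fieldType) (rT : finGroupType) (Gam : {group rT})
    (sigma : rT -> 'M[E]_2) d (rX : mx_representation E Gam d)
    (P : 'M[E]_(d, 2 * 2)) : Prop :=
  [/\ row_free P, in_trace_zero P,
      forall x, x \in Gam -> P *m conj_mx sigma x = rX x *m P,
      mx_irreducible rX & mx_faithful rX].

Section PsiDefs.
Variables (E : fieldType) (gT rT : finGroupType) (G H : {group gT}).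
Variables (f : {morphism H >-> rT}) (d : nat).
Variable (rX : mx_representation E (f @* H) d).

(* n is in N: n normalises Ker = ker f, and Psi o alpha_n ~= Psi where
   alpha_n is the automorphism of Gam = H/Ker induced by conjugation by n,
   i.e. alpha_n (f h) = f (h ^ n)%g; stated after pulling back along the
   surjection f. *)
Definition inN (n : gT) : Prop :=
  n \in 'N_G('ker f)%g /\
  exists2 Q : 'M[E]_d, Q \in unitmx &
    forall h, h \in H -> Q *m rX (f (h ^ n)%g) = rX (f h) *m Q.

Definition even (c : gT) : Prop :=
  [/\ inN c, #[c]%g = 2%N & forall h, h \in H -> f (h ^ c)%g = f h].

(* rG (of dimension m) is Ind_H^G X (Serre's definition): the rows of B
   span an H-stable subspace isomorphic, via f, to X, and the whole space
   is the direct sum of its translates by a transversal of H\G. *)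
Definition is_induced m (rG : mx_representation E G m) (B : 'M[E]_(d, m)) : Prop :=
  [/\ row_free B,
      forall h, h \in H -> B *m rG h = rX (f h) *m B,
      (\sum_(t in transversal (rcosets H G)%g G) <<B *m rG t>> == 1%:M)%MS
    & mxdirect (\sum_(t in transversal (rcosets H G)%g G) <<B *m rG t>>)].

End PsiDefs.

(* Let C be the matrix of c and K = H<c>.  The K-modules are the C-stable
   H-modules; by Maschke's theorem (characteristic 0) and Clifford theory
   (every simple H-submodule of Ind_H^G X is a copy of a conjugate X^u of X),
   each of them is a direct sum of
   - fixed pieces: C-stable copies of some X^u.  C is not a scalar there
     (that would make c^u even), so both eigenvalues 1 and -1 occur, d times
     in all, d = dim X;
   - swapped pieces W + W C with W a non-C-stable copy; there both
     eigenvalues occur exactly d times.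
   Hence if d <= 2 the eigenvalues 1 and -1 occur equally often, and if
   d <= 3 the eigenvalue -1 occurs at most twice as often as 1, strictly
   less when there is a swapped piece; a G-submodule contains one as soon as
   some conjugate of c lies outside N.  Finally d <= 2 when Gam is dihedral
   (its irreducible representations have dimension <= 2), and d <= 3 in any
   case since X consists of trace-zero 2 x 2 matrices. *)

From HB Require Import structures.
From mathcomp Require Import all_boot all_order all_algebra all_fingroup all_solvable all_field all_character.
From mathcomp Require Import zify.
Set Implicit Arguments. Unset Strict Implicit. Unset Printing Implicit Defensive.
Import GRing.Theory.
Local Open Scope ring_scope.

Section Involution.
Variables (E : fieldType) (m : nat) (C : 'M[E]_m).
Hypotheses (CC : C *m C = 1%:M) (two_nz : (2%:R : E) != 0).

Definition eigdim k (V : 'M[E]_(k, m)) (a : E) : nat :=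
  \rank (V :&: eigenspace C a)%MS.

Lemma eigdim_eqmx k1 k2 (V1 : 'M[E]_(k1, m)) (V2 : 'M[E]_(k2, m)) a :
  (V1 :=: V2)%MS -> eigdim V1 a = eigdim V2 a.
Proof. by move=> eqV; apply/eqmx_rank/eqmxP/cap_eqmx. Qed.

Lemma mulmx1pC_eigen k (V : 'M[E]_(k, m)) : (V *m (1%:M + C) <= eigenspace C 1)%MS.
Proof.
by apply/eigenspaceP; rewrite -mulmxA mulmxDl mul1mx CC addrC scale1r.
Qed.

Lemma mulmx1mC_eigen k (V : 'M[E]_(k, m)) : (V *m (1%:M - C) <= eigenspace C (-1))%MS.
Proof.
by apply/eigenspaceP; rewrite -mulmxA mulmxBl mul1mx CC scaleN1r -mulmxN opprB.
Qed.

(* V and V C both lie in V (1 + C) + V (1 - C), as 2 is invertible. *)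
Lemma sub_eigen_parts k (V : 'M[E]_(k, m)) :
  (V + V *m C <= V *m (1%:M + C) + V *m (1%:M - C))%MS.
Proof.
have halve (A : 'M[E]_m) : V *m A = 2%:R^-1 *: (V *m (2%:R *: A)).
  by rewrite -scalemxAr scalerA mulVf // scale1r.
have eV : V = 2%:R^-1 *: (V *m (1%:M + C) + V *m (1%:M - C)).
  by rewrite -mulmxDr addrCA addrK -mulr2n -scaler_nat -halve mulmx1.
have eVC : V *m C = 2%:R^-1 *: (V *m (1%:M + C) - V *m (1%:M - C)).
  by rewrite -mulmxBr opprB addrC addrA subrK -mulr2n -scaler_nat -halve.
rewrite addsmx_sub eVC {1}eV; set Vp := V *m _; set Vm := V *m _.
by rewrite !scalemx_sub ?addmx_sub_adds ?eqmx_opp.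
Qed.

Lemma eigen_cap0 : (eigenspace C 1 :&: eigenspace C (-1))%MS = 0.
Proof.
apply/eqP; rewrite -submx0; set Z := (_ :&: _)%MS.
have Z1 : Z *m C = 1 *: Z by apply/eigenspaceP; rewrite capmxSl.
have Zm1 : Z *m C = (-1) *: Z by apply/eigenspaceP; rewrite capmxSr.
have : (2%:R : E) *: Z = 0.
  by rewrite -[2%:R]/(1 + 1) scalerDl -{2}(opprK 1) scaleNr -Z1 -Zm1 subrr.
by move/eqP; rewrite scalemx_eq0 (negPf two_nz) => /eqP ->.
Qed.

Lemma eigdim_split k (V : 'M[E]_(k, m)) :
  (V *m C <= V)%MS -> (eigdim V 1 + eigdim V (-1))%N = \rank V.
Proof.
move=> sVC; have disj : ((V :&: eigenspace C 1) :&: (V :&: eigenspace C (-1)))%MS = 0.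
  by apply/eqP; rewrite -submx0 -eigen_cap0 capmxS ?capmxSr.
rewrite /eigdim -(mxrank_disjoint_sum disj); apply/eqP; rewrite eqn_leq.
rewrite mxrankS ?addsmx_sub ?capmxSl //= mxrankS //.
apply: submx_trans (submx_trans (addsmxSl V (V *m C)) (sub_eigen_parts V)) _.
apply: addsmxS; rewrite sub_capmx ?mulmx1pC_eigen ?mulmx1mC_eigen andbT.
  by rewrite mulmxDr mulmx1 addmx_sub.
by rewrite mulmxBr mulmx1 addmx_sub ?eqmx_opp.
Qed.

Lemma eigdim_adds_ge k1 k2 (S : 'M[E]_(k1, m)) (V : 'M[E]_(k2, m)) a :
  (S :&: V)%MS = 0 -> (eigdim S a + eigdim V a <= eigdim (S + V)%MS a)%N.
Proof.
move=> dSV; have disj : ((S :&: eigenspace C a) :&: (V :&: eigenspace C a))%MS = 0.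
  by apply/eqP; rewrite -submx0 -dSV capmxS ?capmxSl.
rewrite /eigdim -(mxrank_disjoint_sum disj) mxrankS // addsmx_sub.
by rewrite !capmxS ?addsmxSl ?addsmxSr.
Qed.

Lemma eigdim_adds k1 k2 (S : 'M[E]_(k1, m)) (V : 'M[E]_(k2, m)) :
  (S *m C <= S)%MS -> (V *m C <= V)%MS -> (S :&: V)%MS = 0 ->
  eigdim (S + V)%MS 1 = (eigdim S 1 + eigdim V 1)%N /\
  eigdim (S + V)%MS (-1) = (eigdim S (-1) + eigdim V (-1))%N.
Proof.
move=> sSC sVC dSV; have sSVC : ((S + V)%MS *m C <= S + V)%MS by rewrite addsmxMr addsmxS.
have := mxrank_disjoint_sum dSV; rewrite -(eigdim_split sSVC) -(eigdim_split sSC).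
have := eigdim_adds_ge 1 dSV; have := eigdim_adds_ge (-1) dSV.
by rewrite -(eigdim_split sVC); lia.
Qed.

Lemma eigdim_swap k (W : 'M[E]_(k, m)) : (W :&: W *m C)%MS = 0 ->
  eigdim (W + W *m C)%MS 1 = \rank W /\ eigdim (W + W *m C)%MS (-1) = \rank W.
Proof.
move=> dW; set S := (W + W *m C)%MS.
have sSC : (S *m C <= S)%MS by rewrite addsmxMr -mulmxA CC mulmx1 addsmxC.
have rS : \rank S = (\rank W + \rank W)%N.
  by rewrite mxrank_disjoint_sum // mxrankMfree // row_free_unit; case: (mulmx1_unit CC).
have sWp : (W *m (1%:M + C) <= S)%MS by rewrite mulmxDr mulmx1 addmx_sub_adds.
have sWm : (W *m (1%:M - C) <= S)%MS by rewrite mulmxBr mulmx1 addmx_sub_adds ?eqmx_opp.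
have ep : (\rank (W *m (1%:M + C)) <= eigdim S 1)%N.
  by rewrite mxrankS // sub_capmx sWp mulmx1pC_eigen.
have em : (\rank (W *m (1%:M - C)) <= eigdim S (-1))%N.
  by rewrite mxrankS // sub_capmx sWm mulmx1mC_eigen.
have := mxrankS (sub_eigen_parts W).
have [+ _] := mxrank_adds_leqif (W *m (1%:M + C)) (W *m (1%:M - C)).
have := mxrankM_maxl W (1%:M + C); have := mxrankM_maxl W (1%:M - C).
by move: (eigdim_split sSC); rewrite -/S rS; lia.
Qed.

End Involution.

Lemma pchar0_two_nz (E : fieldType) : [pchar E] =i pred0 -> (2%:R : E) != 0.
Proof. by move=> pchar0; have := pchar0 2; rewrite !inE /= => ->. Qed.

Section InducedFromX.
Variables (E : fieldType) (gT rT : finGroupType) (G H : {group gT}).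
Hypothesis nsHG : (H <| G)%g.
Variables (f : {morphism H >-> rT}) (d : nat) (rX : mx_representation E (f @* H)%g d).
Hypotheses (irrX : mx_irreducible rX) (faithX : mx_faithful rX).
Variables (m : nat) (rG : mx_representation E G m).

Let sHG : (H \subset G)%g := normal_sub nsHG.
Let rH := subg_repr rG sHG.

Lemma memJ_H h u : h \in H -> u \in G -> (h ^ u)%g \in H.
Proof. by move=> Hh Gu; rewrite memJ_norm // (subsetP (normal_norm nsHG)). Qed.

Let d_gt0 : (0 < d)%N := ((mx_irrP _).1 irrX).1.

(* The rows of T span an H-submodule of rG isomorphic to the conjugate X^u
   of X, i.e. to h |-> rX (f (h ^ u)). *)
Definition conj_copy (u : gT) (T : 'M[E]_(d, m)) : Prop :=
  row_free T /\ forall h, h \in H -> T *m rG h = rX (f (h ^ u)%g) *m T.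

Lemma conj_copy_translate u g T : g \in G -> conj_copy u T ->
  conj_copy (g^-1 * u)%g (T *m rG g).
Proof.
move=> Gg [frT homT]; split.
  by rewrite /row_free mxrankMfree ?row_free_unit ?repr_mx_unit.
move=> h Hh; have Hhg : (h ^ g^-1)%g \in H by rewrite memJ_H ?groupV.
have GH := subsetP sHG.
rewrite -mulmxA -(repr_mxM rG Gg (GH _ Hh)) (conjgCV g h).
by rewrite (repr_mxM rG (GH _ Hhg) Gg) mulmxA homT // mulmxA conjgM.
Qed.

(* Since X is irreducible, so is each of its conjugates. *)
Lemma conj_copy_simple u T : u \in G -> conj_copy u T -> mxsimple rH <<T>>%MS.
Proof.
move=> Gu [frT homT].
have modT : mxmodule rH <<T>>%MS.
  by apply/mxmoduleP => h Hh; rewrite genmxE (eqmxMr _ (genmxE T)) /= homT // submxMl.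
split=> //.
  rewrite (eqmx_eq0 (genmxE T)); apply: contraTneq frT => ->.
  by rewrite /row_free mxrank0 eq_sym -lt0n d_gt0.
move=> M modM sMT nzM; have {}sMT : (M <= T)%MS by rewrite -(genmxE T).
set Z := M *m pinvmx T; have defM : Z *m T = M by rewrite /Z mulmxKpV.
have modZ : mxmodule rX <<Z>>%MS.
  apply/mxmoduleP => x /morphimP [k Hk _ ->].
  rewrite genmxE (eqmxMr _ (genmxE Z)) -(submxMfree _ _ frT).
  have Hku : (k ^ u^-1)%g \in H by rewrite memJ_H ?groupV.
  have := homT _ Hku; rewrite conjgKV => homTk.
  by rewrite -mulmxA -homTk mulmxA defM; move/mxmoduleP: modM => /(_ _ Hku).
have nzZ : <<Z>>%MS != 0.
  by rewrite (eqmx_eq0 (genmxE Z)); apply: contraNneq nzM => Z0; rewrite -defM Z0 mul0mx.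
case: irrX => _ _ /(_ _ modZ (submx1 _) nzZ) sZ.
by rewrite genmxE -defM -{1}[T]mul1mx submxMr // -(genmxE Z).
Qed.

(* rG is induced from X: B spans a copy of X, and the translates of <<B>>
   by a transversal of H in G fill the whole space. *)
Variable B : 'M[E]_(d, m).
Hypotheses (copyB : conj_copy 1 B)
  (sumB : (\sum_(t in transversal (rcosets H G) G) <<B *m rG t>> == 1%:M)%MS).

(* Clifford: every simple H-submodule of the induced module is a copy of a
   conjugate of X, since it is a homomorphic image of some translate of B. *)
Lemma simple_conj_copy W : mxsimple rH W ->
  exists2 u, u \in G & exists2 T, conj_copy u T & (T :=: W)%MS.
Proof.
move=> simW; set S := transversal (rcosets H G) G.
have sSG : S \subset G := transversal_sub (transversalP (rcosets_partition sHG)).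
have copyS t : t \in S -> conj_copy t^-1%g (B *m rG t).
  by move=> St; rewrite -[t^-1%g]mulg1; apply: conj_copy_translate; rewrite ?(subsetP sSG).
have simS t : t \in S -> <<B *m rG t>>%MS != 0 -> mxsimple rH <<B *m rG t>>%MS.
  by move=> St _; apply: conj_copy_simple (copyS t St); rewrite groupV (subsetP sSG).
have homS : ((\sum_(t in S) <<B *m rG t>>)%MS <= dom_hom_mx rH 1%:M)%MS.
  by apply/hom_mxP => x _; rewrite !mulmx1.
have sWS : (W <= (\sum_(t in S) <<B *m rG t>>)%MS *m 1%:M)%MS.
  by rewrite mulmx1 (eqmxP sumB) submx1.
have [t St [F unitF homF defW]] := hom_mxsemisimple_iso simW simS homS sWS.
have [frBt homBt] := copyS t St.
exists t^-1%g; first by rewrite groupV (subsetP sSG).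
exists (B *m rG t *m F); last exact: eqmx_trans (eqmxMr F (eqmx_sym (genmxE _))) defW.
split=> [|h Hh]; first by rewrite /row_free mxrankMfree ?row_free_unit.
have homBtF : (B *m rG t <= dom_hom_mx rH F)%MS by rewrite -(genmxE (B *m rG t)).
move/hom_mxP: homBtF => /(_ h Hh) /= homFh.
by rewrite -[rG h]/(rH h) -homFh /= homBt // !mulmxA.
Qed.

Lemma module_conj_copy (U : 'M[E]_m) y : mxmodule rG U -> U != 0 -> y \in G ->
  classically (exists2 T : 'M[E]_(d, m), conj_copy y T & (T <= U)%MS).
Proof.
move=> modU nzU Gy goal withT.
have modHU : mxmodule rH U := mxmodule_subg sHG modU.
apply: (mxsimple_exists modHU nzU) => [[W simW sWU]].
have [u Gu [T copyT defT]] := simple_conj_copy simW.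
have Gg : (u * y^-1)%g \in G by rewrite groupM ?groupV.
apply: withT; exists (T *m rG (u * y^-1)%g).
  have eqy : y = ((u * y^-1)^-1 * u)%g by rewrite invMg invgK mulgKV.
  by rewrite {1}eqy; apply: conj_copy_translate.
by apply: mxmodule_trans modU Gg _; rewrite defT.
Qed.

Variable c : gT.
Hypotheses (Gc : c \in G) (ord_c : #[c]%g = 2%N).

Let C := rG c.

Lemma c_invol : (c * c = 1)%g.
Proof. by rewrite -(expg_order c) ord_c expgS expg1. Qed.

Lemma CC : C *m C = 1%:M.
Proof. by rewrite /C -repr_mxM // c_invol repr_mx1. Qed.

Lemma conj_copy_intertwine u T Q : u \in G -> conj_copy u T -> T *m C = Q *m T ->
  Q *m Q = 1%:M /\
  (forall h, h \in H -> Q *m rX (f (h ^ (c ^ u))%g) = rX (f h) *m Q).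
Proof.
move=> Gu [frT homT] defQ; split.
  apply: (row_free_inj frT); rewrite mul1mx -mulmxA -defQ mulmxA -defQ -mulmxA.
  by rewrite -repr_mxM // c_invol repr_mx1 mulmx1.
move=> h' Hh'; set h := (h' ^ u^-1)%g.
have Hh : h \in H by rewrite memJ_H ?groupV.
have Hhc : (h ^ c)%g \in H by rewrite memJ_H.
have GH := subsetP sHG.
have e1 : ((h ^ c) ^ u)%g = (h' ^ (c ^ u))%g by rewrite /h !conjgE !invMg !invgK !mulgA.
have e2 : (h ^ u)%g = h' by rewrite /h conjgKV.
apply: (row_free_inj frT).
rewrite -mulmxA -e1 -homT // mulmxA -defQ -mulmxA -(repr_mxM rG Gc (GH _ Hhc)).
by rewrite -conjgC (repr_mxM rG (GH _ Hh) Gc) mulmxA homT // e2 -!mulmxA defQ.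
Qed.

Lemma stable_copy_inN u T : u \in G -> conj_copy u T -> (T *m C <= T)%MS ->
  inN G rX (c ^ u)%g.
Proof.
move=> Gu copyT sTC; have [QQ homQ] := conj_copy_intertwine Gu copyT (esym (mulmxKpV sTC)).
have [unitQ _] := mulmx1_unit QQ; split; last by exists (T *m C *m pinvmx T).
rewrite inE groupJ //=; rewrite inE; apply/subsetP => y; rewrite mem_conjg => Ky.
have Hk : (y ^ (c ^ u)^-1)%g \in H by apply: (subsetP (normal_sub (ker_normal f))).
have Hy : y \in H by have := memJ_H Hk (groupJ Gc Gu); rewrite conjgKV.
have := homQ _ Hk; rewrite conjgKV (mker Ky) repr_mx1 mul1mx => eQ.
apply/kerP => //; apply: (mx_faithful_inj faithX); rewrite ?mem_morphim //.
by rewrite repr_mx1 -[rX (f y)](mulKmx unitQ) eQ mulVmx.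
Qed.

Lemma eigen_copy_trivial u T a : u \in G -> conj_copy u T -> (T <= eigenspace C a)%MS ->
  forall h, h \in H -> f (h ^ (c ^ u))%g = f h.
Proof.
move=> Gu copyT /eigenspaceP TCa h Hh.
have [QQ homQ] := conj_copy_intertwine Gu copyT (etrans TCa (esym (mul_scalar_mx a T))).
have [unitQ _] := mulmx1_unit QQ.
apply: (mx_faithful_inj faithX); rewrite ?mem_morphim ?memJ_H ?groupJ //.
by rewrite -[rX (f (h ^ (c ^ u))%g)](mulKmx unitQ) homQ // scalar_mxC mulKmx.
Qed.

Hypothesis notEven : forall u, u \in G -> ~ even G rX (c ^ u)%g.
Hypothesis pchar0 : [pchar E] =i pred0.

Let two_nz : (2%:R : E) != 0 := pchar0_two_nz pchar0.

(* As no conjugate of c is even, C is never a scalar on a simple H-submodule. *)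
Lemma simple_not_eigen W a : mxsimple rH W -> ~ (W <= eigenspace C a)%MS.
Proof.
move=> simW sWa; have [u Gu [T copyT defT]] := simple_conj_copy simW.
have sTa : (T <= eigenspace C a)%MS by rewrite defT.
apply: (notEven Gu); split; last exact: eigen_copy_trivial Gu copyT sTa.
- by apply: stable_copy_inN Gu copyT _; rewrite (eigenspaceP sTa) scalemx_sub.
- by rewrite orderJ.
Qed.

(* Every simple H-submodule is a copy of some X^u, hence has dimension d. *)
Lemma simple_rank W : mxsimple rH W -> \rank W = d.
Proof. by move=> /simple_conj_copy[u _ [T [frT _] <-]]; apply/eqP. Qed.

Lemma fixed_piece W : mxsimple rH W -> (W *m C <= W)%MS ->
  [/\ (0 < eigdim C W 1)%N, (0 < eigdim C W (-1))%N &
      (eigdim C W 1 + eigdim C W (-1))%N = d].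
Proof.
move=> simW sWC; have splitW := eigdim_split CC two_nz sWC.
have full_eigen a : eigdim C W a = \rank W -> (W <= eigenspace C a)%MS.
  move=> ra; have := mxrank_leqif_sup (capmxSl W (eigenspace C a)).
  by rewrite -[\rank _]/(eigdim C W a) ra => /leqif_refl; rewrite sub_capmx => /andP[].
rewrite !lt0n; split; last by rewrite splitW simple_rank.
  by apply/eqP => e0; apply: (simple_not_eigen simW (full_eigen (-1) _)); rewrite -splitW e0.
by apply/eqP => e0; apply: (simple_not_eigen simW (full_eigen 1 _)); rewrite -splitW e0 addn0.
Qed.

Let K := (H <*> <[c]>)%G.

Lemma sKG : (K \subset G)%g.
Proof. by rewrite join_subG sHG cycle_subG Gc. Qed.

Let rK := subg_repr rG sKG.

Lemma mxmoduleK k (V : 'M[E]_(k, m)) :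
  mxmodule rK V = mxmodule rH V && (V *m C <= V)%MS.
Proof.
rewrite /mxmodule join_subG cycle_subG; congr (_ && _).
  apply/subsetP/subsetP => sV h Hh; move: (sV h Hh); rewrite !inE /= => /andP[_ sVh].
    by rewrite Hh.
  by rewrite (subsetP (joing_subl _ _)).
by rewrite inE (subsetP (joing_subr _ _)) ?cycle_id.
Qed.

(* In characteristic 0, Maschke's theorem lets us split off any K-submodule,
   and eigenspace dimensions add up along the splitting. *)
Lemma maschke_split (V S : 'M[E]_m) : mxmodule rK V -> mxmodule rK S ->
  (S <= V)%MS -> S != 0 ->
  exists V' : 'M[E]_m, [/\ mxmodule rK V', (\rank V' < \rank V)%N,
     eigdim C V 1 = (eigdim C S 1 + eigdim C V' 1)%N &
     eigdim C V (-1) = (eigdim C S (-1) + eigdim C V' (-1))%N].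
Proof.
move=> modV modS sSV nzS.
have pgK : ([pchar E]^'.-group K)%g by apply/pgroupP => p _ _; rewrite inE /= pchar0.
have [V' modV' defV /mxdirect_addsP dSV'] :=
  mx_reducibleS modV (submx1 V) (mx_Maschke_pchar rK pgK) modS sSV.
have [e1 em1] : eigdim C (S + V')%MS 1 = (eigdim C S 1 + eigdim C V' 1)%N /\
    eigdim C (S + V')%MS (-1) = (eigdim C S (-1) + eigdim C V' (-1))%N.
  move: modS (modV'); rewrite !mxmoduleK => /andP[_ sSC] /andP[_ sV'C].
  by apply: (eigdim_adds CC two_nz sSC sV'C).
exists V'; split; rewrite -?(eigdim_eqmx C _ defV) //.
by rewrite -defV mxrank_disjoint_sum // -{1}[\rank V']add0n ltn_add2r lt0n mxrank_eq0.
Qed.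

(* As H is normal, C maps H-submodules to H-submodules. *)
Lemma mxmoduleHC k (W : 'M[E]_(k, m)) : mxmodule rH W -> mxmodule rH (W *m C).
Proof.
move=> /mxmoduleP modW; apply/mxmoduleP => h Hh.
have Hhc : (h ^ c^-1)%g \in H by rewrite memJ_H ?groupV.
have GH := subsetP sHG.
rewrite /= /C -mulmxA -(repr_mxM rG Gc (GH _ Hh)) (conjgCV c h).
by rewrite (repr_mxM rG (GH _ Hhc) Gc) mulmxA submxMr // modW.
Qed.

Lemma swap_piece W : mxsimple rH W -> ~~ (W *m C <= W)%MS ->
  (W :&: W *m C)%MS = 0 /\ mxmodule rK (W + W *m C)%MS.
Proof.
move=> [modW nzW minW] nsWC; have modWC := mxmoduleHC modW.
split; last first.
  rewrite mxmoduleK addsmx_module //=.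
  by rewrite addsmxMr -mulmxA CC mulmx1 addsmxC.
apply/eqP; apply: contraNT nsWC => nzWWC.
have sWWC := submx_trans (minW _ (capmx_module modW modWC) (capmxSl _ _) nzWWC) (capmxSr _ _).
have rWC : \rank (W *m C) = \rank W by rewrite mxrankMfree // row_free_unit repr_mx_unit.
by have := mxrank_leqif_sup sWWC; rewrite rWC => /leqif_refl.
Qed.

(* Induction on the rank of a K-module, splitting off either a C-stable
   simple H-submodule or a sum W + W C of two exchanged ones. *)
Lemma eigdim_K_ind (Q : nat -> nat -> bool) :
  Q 0 0 ->
  (forall a b a' b', (0 < a)%N -> (0 < b)%N -> (a + b)%N = d ->
     Q a' b' -> Q (a + a') (b + b')) ->
  (forall a' b', Q a' b' -> Q (d + a') (d + b')) ->
  forall V : 'M[E]_m, mxmodule rK V -> Q (eigdim C V 1) (eigdim C V (-1)).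
Proof.
move=> Q0 Qfixed Qswap V.
elim: {V}_.+1 {-2}V (ltnSn (\rank V)) => // r IH V ltVr modV.
have [-> | nzV] := eqVneq V 0; first by rewrite /eigdim !cap0mx !mxrank0.
move: (modV); rewrite mxmoduleK => /andP[modHV sVC].
apply: (mxsimple_exists modHV nzV) => -[W simW sWV]; have [modW nzW _] := simW.
have [sWC | nsWC] := boolP (W *m C <= W)%MS.
  have modKW : mxmodule rK W by rewrite mxmoduleK modW.
  have [V' [modV' ltV' -> ->]] := maschke_split modV modKW sWV nzW.
  have [p1 pm1 sum1] := fixed_piece simW sWC.
  by apply: Qfixed => //; apply: IH (leq_trans ltV' _) modV'.
have [dW modS] := swap_piece simW nsWC.
have sSV : (W + W *m C <= V)%MS.
  by rewrite addsmx_sub sWV (submx_trans (submxMr _ sWV) sVC).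
have nzS : (W + W *m C)%MS != 0.
  by apply: contraNneq nzW => S0; rewrite -submx0 -S0 addsmxSl.
have [V' [modV' ltV' -> ->]] := maschke_split modV modS sSV nzS.
have [-> ->] := eigdim_swap CC two_nz dW; rewrite simple_rank //.
by apply: Qswap; apply: IH (leq_trans ltV' _) modV'.
Qed.

(* If dim X <= 2, each fixed piece contributes one eigenvalue of each sign. *)
Lemma eigdim_K_dim2 (V : 'M[E]_m) : (d <= 2)%N -> mxmodule rK V ->
  eigdim C V 1 = eigdim C V (-1).
Proof.
move=> d_le2 modV; apply/eqP.
apply: (eigdim_K_ind (Q := fun a b => a == b) _ _ _ modV) => //.
  by move=> a b a' b' a0 b0 sum_ab /eqP ->; apply/eqP; lia.
by move=> a' b' /eqP ->.
Qed.

(* If dim X <= 3, each fixed piece has at most twice as many -1's as 1's. *)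
Lemma eigdim_K_dim3 (V : 'M[E]_m) : (d <= 3)%N -> mxmodule rK V ->
  (eigdim C V (-1) <= 2 * eigdim C V 1)%N.
Proof.
move=> d_le3 modV.
apply: (eigdim_K_ind (Q := fun a b => (b <= 2 * a)%N) _ _ _ modV) => //.
  by move=> a b a' b' a0 b0 sum_ab; lia.
by move=> a' b'; lia.
Qed.

(* If some conjugate c^y lies outside N, every nonzero G-submodule contains a
   non-C-stable copy of X^y, i.e. a swapped piece, which makes the bound strict. *)
Lemma eigdim_G_strict (U : 'M[E]_m) y : mxmodule rG U -> U != 0 ->
  y \in G -> ~ inN G rX (c ^ y)%g -> (d <= 3)%N ->
  (eigdim C U (-1) < 2 * eigdim C U 1)%N.
Proof.
move=> modU nzU Gy notNy d_le3; have modKU := mxmodule_subg sKG modU.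
apply: (module_conj_copy modU nzU Gy) => -[T copyT sTU].
have simT := conj_copy_simple Gy copyT; have [_ nzT _] := simT.
have nsTC : ~~ (<<T>>%MS *m C <= <<T>>)%MS.
  apply/negP => sTC; apply/notNy/(stable_copy_inN Gy copyT).
  by rewrite -(genmxE T) -(eqmxMr _ (genmxE T)).
have [dT modS] := swap_piece simT nsTC.
have sSU : (<<T>> + <<T>> *m C <= U)%MS.
  have sTU' : (<<T>> <= U)%MS by rewrite genmxE.
  by rewrite addsmx_sub sTU' (mxmodule_trans modU Gc sTU').
have nzS : (<<T>> + <<T>> *m C)%MS != 0.
  by apply: contraNneq nzT => S0; rewrite -submx0 -S0 addsmxSl.
have [V' [modV' _ -> ->]] := maschke_split modKU modS sSU nzS.
have [-> ->] := eigdim_swap CC two_nz dT; rewrite simple_rank //.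
rewrite mulnDr -addSn leq_add ?eigdim_K_dim3 //.
by rewrite mul2n -addnn -addn1 leq_add2l d_gt0.
Qed.

Lemma eigdim_G_half (U : 'M[E]_m) : mxmodule rG U -> (d <= 2)%N ->
  (eigdim C U 1 * 2)%N = \rank U /\ (eigdim C U (-1) * 2)%N = \rank U.
Proof.
move=> modU d_le2; have splitU := eigdim_split CC two_nz (mxmoduleP modU c Gc).
have := eigdim_K_dim2 d_le2 (mxmodule_subg sKG modU); lia.
Qed.

Lemma eigdim_G_two_thirds (U : 'M[E]_m) y : mxmodule rG U -> U != 0 ->
  y \in G -> ~ inN G rX (c ^ y)%g -> (d <= 3)%N ->
  (eigdim C U (-1) * 3 < \rank U * 2)%N.
Proof.
move=> modU nzU Gy notNy d_le3; rewrite -(eigdim_split CC two_nz (mxmoduleP modU c Gc)).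
have := eigdim_G_strict modU nzU Gy notNy d_le3; lia.
Qed.

End InducedFromX.

(* X lies in the trace-zero matrices, a proper subspace of 'M_2: dim X <= 3. *)
Lemma trace_zero_rank_le3 (E : fieldType) d (P : 'M[E]_(d, 2 * 2)) :
  (2%:R : E) != 0 -> row_free P -> in_trace_zero P -> (d <= 3)%N.
Proof.
move=> two_nz frP trP; rewrite leqNgt; apply/negP => d_gt3.
have fullP : row_full P.
  by rewrite /row_full; apply/eqP/anti_leq; rewrite rank_leq_col (eqP frP).
have := mulmxKpV (submx_full (mxvec (1%:M : 'M[E]_2)) fullP).
move=> /(congr1 (fun v => \tr (vec_mx v))); rewrite mxvecK mxtrace1.
rewrite mulmx_sum_row !linear_sum big1 => [/esym/eqP|i _]; first by rewrite (negPf two_nz).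
by rewrite !linearZ /= trP mulr0.
Qed.

(* Over an algebraically closed field, the irreducible representations of a
   dihedral group have dimension at most 2: an eigenvector v of the rotation
   spans, together with its image under a reflection, a submodule. *)
Lemma dihedral_irr_rank_le2 (E : closedFieldType) (rT : finGroupType)
    (Gam : {group rT}) d (rX : mx_representation E Gam d) n :
  mx_irreducible rX -> (1 < n)%N -> (Gam \isog 'D_(2 * n))%g -> (d <= 2)%N.
Proof.
move=> irrX n_gt1 isoD.
have := (Grp_dihedral n_gt1) _ Gam; rewrite -mul2n isog_hom //.
case/esym/existsP => -[x y] /= /eqP [defGam _ y2 xy].
have Gx : x \in Gam by rewrite -defGam mem_gen // inE cycle_id.
have Gy : y \in Gam by rewrite -defGam mem_gen // inE cycle_id orbT.
have yy : (y * y = 1)%g by rewrite -y2 expgS expg1.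
have yV : (y^-1 = y)%g by apply/eqP; rewrite eq_invg_mul yy.
have yx : (y * x = x^-1 * y)%g by rewrite -xy conjgE yV !mulgA -(mulgA _ y y) yy mulg1.
have [d_gt0 _] := (mx_irrP _).1 irrX.
have : size (char_poly (rX x)) != 1%N by rewrite size_char_poly eqSS -lt0n.
case/closed_rootP => lam; rewrite -eigenvalue_root_char => /eigenvalueP [v vx nzv].
have vxV : (v *m rX x^-1%g <= v)%MS.
  have : (x^-1 \in rstabs rX v)%g by rewrite groupV inE Gx /= vx scalemx_sub.
  by rewrite inE => /andP[].
set M := (v + v *m rX y)%MS.
have modM : mxmodule rX <<M>>%MS.
  rewrite (eqmx_module _ (genmxE M)) /mxmodule -defGam join_subG !cycle_subG.
  have vM : (v <= M)%MS := addsmxSl _ _.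
  have vyM : (v *m rX y <= M)%MS := addsmxSr _ _.
  rewrite !inE Gx Gy /= !addsmxMr !addsmx_sub vx scalemx_sub //= vyM.
  rewrite -!mulmxA -!repr_mxM // yx yy repr_mx1 mulmx1 repr_mxM ?groupV // mulmxA.
  by rewrite vM (submx_trans (submxMr _ vxV) vyM).
have nzM : <<M>>%MS != 0.
  by rewrite (eqmx_eq0 (genmxE M)); apply: contraNneq nzv => M0; rewrite -submx0 -M0 addsmxSl.
case: irrX => _ _ /(_ _ modM (submx1 _) nzM) /mxrankS; rewrite mxrank1 genmxE => rkM.
apply: leq_trans rkM (leq_trans (mxrank_adds_leqif v (v *m rX y)).1 _).
by rewrite -[2%N]/(1 + 1)%N leq_add ?rank_leq_row.
Qed.

Theorem lemma4p8
  (E : closedFieldType) (hE : [pchar E] =i pred0)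
  (gT rT : finGroupType) (G H : {group gT}) (hHG : (H <| G)%g)
  (f : {morphism H >-> rT})
  (sigma : rT -> 'M[E]_2)
  (hsigma : proj_embedding ((f @* H)%g) sigma)
  (hirr : irreducible_on_PV ((f @* H)%g) sigma)
  (hGam : (exists n : nat, [/\ odd n, (3 <= n)%N & ((f @* H)%g \isog 'D_(2 * n))%g])
          \/ ((f @* H)%g \isog 'Alt_('I_4))%g \/ ((f @* H)%g \isog 'Sym_('I_4))%g
          \/ ((f @* H)%g \isog 'Alt_('I_5))%g)
  (d : nat) (rX : mx_representation E ((f @* H)%g) d) (P : 'M[E]_(d, 2 * 2))
  (hX : is_Psi sigma rX P)
  (c0 : gT) (hc0G : c0 \in G) (hc0 : #[c0]%g = 2%N)
  (hnoteven : forall c, c \in (c0 ^: G)%g -> ~ even G rX c)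
  (hnotN : exists2 c, c \in (c0 ^: G)%g & ~ inN G rX c)
  (m : nat) (rG : mx_representation E G m) (B : 'M[E]_(d, m))
  (hind : is_induced rX rG B)
  (U : 'M[E]_m) (hU : mxmodule rG U) (hUs : mxsimple rG U)
  (c : gT) (hc : c \in (c0 ^: G)%g) :
  ((exists n : nat, [/\ odd n, (3 <= n)%N & ((f @* H)%g \isog 'D_(2 * n))%g]) ->
     (\rank (U :&: eigenspace (rG c) 1)%MS * 2 = \rank U)%N /\
     (\rank (U :&: eigenspace (rG c) (-1))%MS * 2 = \rank U)%N)
  /\
  (((f @* H)%g \isog 'Alt_('I_4))%g \/ ((f @* H)%g \isog 'Sym_('I_4))%g \/ ((f @* H)%g \isog 'Alt_('I_5))%g ->
     (\rank (U :&: eigenspace (rG c) (-1))%MS * 3 < \rank U * 2)%N).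
Proof.
have [frP trP _ irrX faithX] := hX.
have [frB homB sumB _] := hind.
have copyB : conj_copy rX rG 1 B by split=> // h Hh; rewrite conjg1 homB.
have [modU nzU _] := hUs.
case/imsetP: hc => a Ga ->.
have Gc : (c0 ^ a)%g \in G by rewrite groupJ.
have ord_c : #[c0 ^ a]%g = 2%N by rewrite orderJ.
have notEven u : u \in G -> ~ even G rX ((c0 ^ a) ^ u)%g.
  by move=> Gu; apply: hnoteven; rewrite -conjgM memJ_class ?groupM.
split.
  case=> n [_ n_ge3 isoD]; have d_le2 := dihedral_irr_rank_le2 irrX (ltnW n_ge3) isoD.
  exact (eigdim_G_half hHG irrX faithX copyB sumB Gc ord_c notEven hE hU d_le2).
move=> _; case: hnotN => _ /imsetP[b Gb ->] notNb.
have d_le3 := trace_zero_rank_le3 (pchar0_two_nz hE) frP trP.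
have Gy : (a^-1 * b)%g \in G by rewrite groupM ?groupV.
apply: (eigdim_G_two_thirds hHG irrX faithX copyB sumB Gc ord_c notEven hE hU nzU Gy _ d_le3).
by rewrite -conjgM mulKVg.
Qed.
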